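(* The following inclusions are homotopy equivalences of topological hyperfields: 1. $\mathbb{K}\hookrightarrow\triangle_0$; 2. $\mathbb{S}\hookrightarrow\mathcal{T}\mathbb{R}_0$; 3. $\Phi\hookrightarrow\mathcal{T}\mathbb{C}_0$; 4. $\mathbb{K}\hookrightarrow\mathcal{T}\triangle_0$. In each case a homotopy inverse is given by $\operatorname{ph}(x)=x/|x|$ for $x\ne0$, with $\operatorname{ph}(0)=0$.
   Context: Hyperfields. A hyperfield $(F,\odot,\boxplus,1,0)$ has the following data and axioms. - $\odot$ is a commutative multiplication and $\boxplus$ is a hyperaddition assigning to each $x,y$ a nonempty subset $x\boxplus y\subseteq F$ (extended to subsets by unions). - $\boxplus$ is commutative and associative, and $x\boxplus 0=\{x\}$. - Each $x$ has a unique $-x$ with $0\in x\boxplus(-x)$, and $x\in y\boxplus z \iff z\in x\boxplus(-y)$. - $(F\setminus\{0\},\odot,1)$ is an abelian group, $0\odot x=0$, and $x\odot(y\boxplus z)=(x\odot y)\boxplus(x\odot z)$. A homomorphism $h$ satisfies $h(0)=0$, $h(1)=1$, $h(xy)=h(x)h(y)$ and $h(x\boxplus y)\subseteq h(x)\boxplus h(y)$. Topological hyperfields. A topological hyperfield is a hyperfield with a topology in which $F\setminus\{0\}$ is open, multiplication is continuous, and inversion on $F^\times$ is continuous. If $T$ is the topology, the 0-coarse topology has as open sets $F$ together with all $U\in T$ with $0\notin U$. Homotopies. A hyperfield homotopy is a continuous $H:F\times[0,1]\to F'$ with each $H_t$ a hyperfield homomorphism. A homotopy equivalence of topological hyperfields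 is a continuous homomorphism $h:F\to F'$ for which there exist a continuous homomorphism $g:F'\to F$ and hyperfield homotopies $G$ on $F$ and $H$ on $F'$ with $G_0=\mathrm{id}$, $G_1=g\circ h$, $H_0=\mathrm{id}$, $H_1=h\circ g$. Hyperfields, all with multiplication that of $\mathbb{C}$. - $\mathbb{K}=\{0,1\}$ with $1\boxplus1=\{0,1\}$; open sets $\emptyset,\{1\},\{0,1\}$. - $\mathbb{S}=\{-1,0,1\}$ with $1\boxplus1=\{1\}$, $(-1)\boxplus(-1)=\{-1\}$, $1\boxplus(-1)=\{-1,0,1\}$; open sets $\emptyset,\{1\},\{-1\},\{1,-1\},\mathbb{S}$. - $\Phi=S^1\cup\{0\}$ with $a\boxplus a=\{a\}$ and $a\boxplus(-a)=S^1\cup\{0\}$; for $b\ne\pm a$ in $S^1$, $a\boxplus b$ is the shortest closed arc joining $a,b$. Its open sets are the open subsets of $S^1$ and $S^1\cup\{0\}$. - $\triangle=\mathbb{R}_{\ge0}$ with $a\boxplus b=[|a-b|,a+b]$. - $\mathcal{T}\triangle=\mathbb{R}_{\ge0}$ with $a\boxplus b=\{\max(a,b)\}$ if $a\ne b$, and $a\boxplus a=[0,a]$. - $\mathcal{T}\mathbb{R}=\mathbb{R}$ with $a\boxplus b=\{a\}$ if $|a|>|b|$ or $a=b$, and $a\boxplus(-a)=[-|a|,|a|]$. - $\mathcal{T}\mathbb{C}=\mathbb{C}$ with: $a\boxplus b=\{a\}$ if $|a|>|b|$; $a\boxplus(-a)=\{x:|x|\le|a|\}$; if $|a|=|b|$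 and $b\ne-a$, $a\boxplus b$ is the shortest closed arc from $a$ to $b$ on the circle of radius $|a|$. The subscript $0$ denotes the 0-coarse topology derived from the Euclidean topology. *)

From Stdlib Require Import Reals Lra.
Open Scope R_scope.

Definition C : Type := (R * R)%type.
Definition C0 : C := (0, 0).
Definition C1 : C := (1, 0).
Definition RtoC (r : R) : C := (r, 0).
Definition Cadd (z w : C) : C := (fst z + fst w, snd z + snd w).
Definition Copp (z : C) : C := (- fst z, - snd z).
Definition Csub (z w : C) : C := Cadd z (Copp w).
Definition Cmul (z w : C) : C :=
  (fst z * fst w - snd z * snd w, fst z * snd w + snd z * fst w).
Definition Cscale (r : R) (z : C) : C := (r * fst z, r * snd z).
Definition Cnorm (z : C) : R := sqrt (fst z * fst z + snd z * snd z).

Definition ph (z : C) : C :=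
  if Req_EM_T (Cnorm z) 0 then C0 else Cscale (/ Cnorm z) z.

(* ---------- Hyperfields realised inside C ----------
   All hyperfields of the paper considered here are subsets of C, with the
   multiplication of C, unit C1 and zero C0.  A (topological) hyperfield of
   this kind is given by its carrier, its hyperaddition as a ternary relation
   ([hadd x y z] means z ∈ x ⊞ y) and its family of open sets (open sets are
   subsets of the carrier). *)
Record HF := mkHF {
  car : C -> Prop;
  hadd : C -> C -> C -> Prop;
  opens : (C -> Prop) -> Prop
}.

Definition euclid_open (P U : C -> Prop) : Prop :=
  (forall z, U z -> P z) /\
  forall x, U x -> exists eps, eps > 0 /\
    forall y, P y -> Cnorm (Csub y x) < eps -> U y.

Definition zero_coarse (P : C -> Prop) (T : (C -> Prop) -> Prop)
  (U : C -> Prop) : Prop :=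
  (forall z, U z <-> P z) \/ (T U /\ ~ U C0).

Definition is_hom (F F' : HF) (h : C -> C) : Prop :=
  (forall x, car F x -> car F' (h x)) /\
  h C0 = C0 /\ h C1 = C1 /\
  (forall x y, car F x -> car F y -> h (Cmul x y) = Cmul (h x) (h y)) /\
  (forall x y z, car F x -> car F y -> hadd F x y z ->
     hadd F' (h x) (h y) (h z)).

Definition continuous_map (F F' : HF) (h : C -> C) : Prop :=
  (forall x, car F x -> car F' (h x)) /\
  forall V, opens F' V -> opens F (fun x => car F x /\ V (h x)).

Definition unit_interval (t : R) : Prop := 0 <= t <= 1.

Definition prod_open (F : HF) (W : C -> R -> Prop) : Prop :=
  (forall x t, W x t -> car F x /\ unit_interval t) /\
  forall x t, W x t -> exists U eps,
    opens F U /\ U x /\ eps > 0 /\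
    forall y s, U y -> unit_interval s -> Rabs (s - t) < eps -> W y s.

Definition continuous_homotopy (F F' : HF) (H : C -> R -> C) : Prop :=
  (forall x t, car F x -> unit_interval t -> car F' (H x t)) /\
  forall V, opens F' V ->
    prod_open F (fun x t => car F x /\ unit_interval t /\ V (H x t)).

Definition hf_homotopy (F F' : HF) (H : C -> R -> C) : Prop :=
  continuous_homotopy F F' H /\
  forall t, unit_interval t -> is_hom F F' (fun x => H x t).

Definition homotopy_equivalence_via (F F' : HF) (h g : C -> C) : Prop :=
  is_hom F F' h /\ continuous_map F F' h /\
  is_hom F' F g /\ continuous_map F' F g /\
  (exists G, hf_homotopy F F G /\
     (forall x, car F x -> G x 0 = x) /\
     (forall x, car F x -> G x 1 = g (h x))) /\
  (exists H, hf_homotopy F' F' H /\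
     (forall x, car F' x -> H x 0 = x) /\
     (forall x, car F' x -> H x 1 = h (g x))).

Definition homotopy_equivalence (F F' : HF) (h : C -> C) : Prop :=
  exists g, homotopy_equivalence_via F F' h g.

Definition is_real_nonneg (z : C) : Prop := snd z = 0 /\ 0 <= fst z.
Definition is_real (z : C) : Prop := snd z = 0.
Definition unit_circle (z : C) : Prop := Cnorm z = 1.

Definition K_car (z : C) : Prop := z = C0 \/ z = C1.
Definition K_hadd (x y z : C) : Prop :=
  (x = C0 /\ z = y) \/ (y = C0 /\ z = x) \/
  (x = C1 /\ y = C1 /\ (z = C0 \/ z = C1)).
Definition K_opens (U : C -> Prop) : Prop :=
  (forall z, ~ U z) \/ (forall z, U z <-> z = C1) \/ (forall z, U z <-> K_car z).
Definition Kh : HF := mkHF K_car K_hadd K_opens.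

Definition Cm1 : C := (-1, 0).
Definition S_car (z : C) : Prop := z = Cm1 \/ z = C0 \/ z = C1.
Definition S_hadd (x y z : C) : Prop :=
  (x = C0 /\ z = y) \/ (y = C0 /\ z = x) \/
  (x <> C0 /\ y = x /\ z = x) \/
  (x <> C0 /\ y = Copp x /\ S_car z).
Definition S_opens (U : C -> Prop) : Prop :=
  (forall z, ~ U z) \/ (forall z, U z <-> z = C1) \/
  (forall z, U z <-> z = Cm1) \/ (forall z, U z <-> (z = C1 \/ z = Cm1)) \/
  (forall z, U z <-> S_car z).
Definition Sh : HF := mkHF S_car S_hadd S_opens.

(* closed cone spanned by a and b: for |a| = |b| > 0, b <> -a, intersected with
   the circle of radius |a| it is the shortest closed arc from a to b *)
Definition in_cone (a b z : C) : Prop :=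
  exists l m, 0 <= l /\ 0 <= m /\ z = Cadd (Cscale l a) (Cscale m b).

Definition Phi_car (z : C) : Prop := unit_circle z \/ z = C0.
Definition Phi_hadd (x y z : C) : Prop :=
  (x = C0 /\ z = y) \/ (y = C0 /\ z = x) \/
  (x <> C0 /\ y = x /\ z = x) \/
  (x <> C0 /\ y = Copp x /\ Phi_car z) \/
  (x <> C0 /\ y <> C0 /\ y <> x /\ y <> Copp x /\
     unit_circle z /\ in_cone x y z).
Definition Phi_opens (U : C -> Prop) : Prop :=
  (forall z, U z <-> Phi_car z) \/ euclid_open unit_circle U.
Definition Phih : HF := mkHF Phi_car Phi_hadd Phi_opens.

Definition Tri_hadd (x y z : C) : Prop :=
  is_real_nonneg z /\ Rabs (fst x - fst y) <= fst z <= fst x + fst y.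
Definition Tri0 : HF :=
  mkHF is_real_nonneg Tri_hadd
       (zero_coarse is_real_nonneg (euclid_open is_real_nonneg)).

Definition TTri_hadd (x y z : C) : Prop :=
  is_real_nonneg z /\
  ((x <> y /\ fst z = Rmax (fst x) (fst y)) \/
   (x = y /\ 0 <= fst z <= fst x)).
Definition TTri0 : HF :=
  mkHF is_real_nonneg TTri_hadd
       (zero_coarse is_real_nonneg (euclid_open is_real_nonneg)).

Definition TR_hadd (x y z : C) : Prop :=
  is_real z /\
  ((Rabs (fst x) > Rabs (fst y) /\ z = x) \/
   (Rabs (fst y) > Rabs (fst x) /\ z = y) \/
   (x = y /\ z = x) \/
   (y = Copp x /\ - Rabs (fst x) <= fst z <= Rabs (fst x))).
Definition TR0 : HF :=
  mkHF is_real TR_hadd (zero_coarse is_real (euclid_open is_real)).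

Definition TC_car (z : C) : Prop := True.
Definition TC_hadd (x y z : C) : Prop :=
  (Cnorm x > Cnorm y /\ z = x) \/
  (Cnorm y > Cnorm x /\ z = y) \/
  (y = Copp x /\ Cnorm z <= Cnorm x) \/
  (Cnorm x = Cnorm y /\ y <> Copp x /\ Cnorm z = Cnorm x /\ in_cone x y z).
Definition TC0 : HF :=
  mkHF TC_car TC_hadd (zero_coarse TC_car (euclid_open TC_car)).

(* In each case [ph] retracts the big hyperfield onto the small one and fixes
   the small one pointwise, so [ph] after the inclusion is the identity and the
   first homotopy can be taken constant.  On the big side, [H(z, t) = |z|^(-t) z]
   deforms the identity into [ph].  For [t < 1] it acts on norms by
   [r |-> r^(1-t)], which is multiplicative, strictly increasing and
   subadditive; these three properties are exactly what is needed to preserve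
   each hyperaddition (triangle inequalities, maxima, comparisons of norms,
   cones on circles).  Continuity only has to be checked away from [0]: in a
   0-coarse topology the only open set containing [0] is the whole space. *)

From Pilot Require Import Defs.
From Stdlib Require Import Reals Lra Classical FunctionalExtensionality.
Open Scope R_scope.

(** * Continuity of real functions of three variables *)

Definition continuous3_at (f : R -> R -> R -> R) (a b c : R) : Prop :=
  forall e, e > 0 -> exists d, d > 0 /\ forall u v w,
    Rabs (u - a) < d -> Rabs (v - b) < d -> Rabs (w - c) < d ->
    Rabs (f u v w - f a b c) < e.

Lemma continuity_pt_eps (g : R -> R) (a : R) : continuity_pt g a ->
  forall e, e > 0 -> exists d, d > 0 /\
    forall y, Rabs (y - a) < d -> Rabs (g y - g a) < e.
Proof.
  intros Hg e He. destruct (Hg e He) as [d [Hd Hclose]]. exists d. split; [exact Hd|].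
  intros y Hy. destruct (Req_dec y a) as [->|Hya].
  - rewrite Rminus_diag, Rabs_R0; exact He.
  - apply (Hclose y). split; [split; [exact I|auto]|exact Hy].
Qed.

Lemma continuous3_fst a b c : continuous3_at (fun u _ _ => u) a b c.
Proof. intros e He. exists e. split; auto. Qed.

Lemma continuous3_snd a b c : continuous3_at (fun _ v _ => v) a b c.
Proof. intros e He. exists e. split; auto. Qed.

Lemma continuous3_thd a b c : continuous3_at (fun _ _ w => w) a b c.
Proof. intros e He. exists e. split; auto. Qed.

Lemma continuous3_plus f g a b c :
  continuous3_at f a b c -> continuous3_at g a b c ->
  continuous3_at (fun u v w => f u v w + g u v w) a b c.
Proof.
  intros Hf Hg e He.
  destruct (Hf (e / 2)) as [d1 [Hd1 Hf1]]; [lra|].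
  destruct (Hg (e / 2)) as [d2 [Hd2 Hg2]]; [lra|].
  exists (Rmin d1 d2). split; [apply Rmin_case; lra|].
  intros u v w Hu Hv Hw.
  pose proof (Rmin_l d1 d2). pose proof (Rmin_r d1 d2).
  specialize (Hf1 u v w ltac:(lra) ltac:(lra) ltac:(lra)).
  specialize (Hg2 u v w ltac:(lra) ltac:(lra) ltac:(lra)).
  replace (f u v w + g u v w - (f a b c + g a b c))
    with ((f u v w - f a b c) + (g u v w - g a b c)) by ring.
  eapply Rle_lt_trans; [apply Rabs_triang|lra].
Qed.

Lemma continuous3_comp (g : R -> R) f a b c :
  continuity_pt g (f a b c) -> continuous3_at f a b c ->
  continuous3_at (fun u v w => g (f u v w)) a b c.
Proof.
  intros Hg Hf e He.
  destruct (continuity_pt_eps _ _ Hg e He) as [d1 [Hd1 Hg1]].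
  destruct (Hf d1 Hd1) as [d [Hd Hf1]].
  exists d. split; [exact Hd|]. intros u v w Hu Hv Hw. exact (Hg1 _ (Hf1 u v w Hu Hv Hw)).
Qed.

Lemma continuous3_opp f a b c :
  continuous3_at f a b c -> continuous3_at (fun u v w => - f u v w) a b c.
Proof.
  apply (continuous3_comp (fun x => - x)).
  exact (continuity_pt_opp id _ (derivable_continuous_pt _ _ (derivable_pt_id _))).
Qed.

Lemma continuous3_mult f g a b c :
  continuous3_at f a b c -> continuous3_at g a b c ->
  continuous3_at (fun u v w => f u v w * g u v w) a b c.
Proof.
  intros Hf Hg.
  (* polarization: 4 f g = (f + g)^2 - (f - g)^2 *)
  assert (Hsq : forall y, continuity_pt (fun x => x * x) y).
  { intros y. pose proof (derivable_continuous_pt _ _ (derivable_pt_id y)) as Hid.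
    exact (continuity_pt_mult id id y Hid Hid). }
  assert (Hpol : continuous3_at (fun u v w =>
    / 4 * ((f u v w + g u v w) * (f u v w + g u v w)
           + - ((f u v w + - g u v w) * (f u v w + - g u v w)))) a b c).
  { apply (continuous3_comp (fun x => / 4 * x)).
    { exact (continuity_pt_scal id _ _ (derivable_continuous_pt _ _ (derivable_pt_id _))). }
    apply continuous3_plus; [|apply continuous3_opp];
      apply (continuous3_comp (fun x => x * x)); auto;
      apply continuous3_plus; auto using continuous3_opp. }
  intros e He. destruct (Hpol e He) as [d [Hd Hclose]]. exists d. split; [exact Hd|].
  intros u v w Hu Hv Hw. specialize (Hclose u v w Hu Hv Hw).
  eapply Rle_lt_trans; [|exact Hclose]. right; f_equal; field.
Qed.

Lemma C_eq_dec (z w : Defs.C) : {z = w} + {z <> w}.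
Proof.
  destruct z as [a b], w as [a' b'].
  destruct (Req_EM_T a a') as [->|Ha]; [|right; intros E; injection E; auto].
  destruct (Req_EM_T b b') as [->|Hb]; [left; reflexivity|right; intros E; injection E; auto].
Qed.

Lemma C_eq (z w : Defs.C) : fst z = fst w -> snd z = snd w -> z = w.
Proof. destruct z, w; simpl; intros -> ->; reflexivity. Qed.

Lemma Cnorm_ge0 z : 0 <= Cnorm z.
Proof. apply sqrt_pos. Qed.

Lemma Cnorm_C0 : Cnorm C0 = 0.
Proof. unfold Cnorm; simpl. rewrite Rmult_0_l, Rplus_0_l. apply sqrt_0. Qed.

Lemma Cnorm_eq0 z : Cnorm z = 0 -> z = C0.
Proof.
  destruct z as [a b]; unfold Cnorm; simpl; intros H.
  apply sqrt_eq_0 in H; [|nra]. apply C_eq; simpl; nra.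
Qed.

Lemma Cnorm2_pos z : z <> C0 -> 0 < fst z * fst z + snd z * snd z.
Proof.
  intros Hz. destruct (Rle_lt_dec (fst z * fst z + snd z * snd z) 0) as [Hle|]; [|assumption].
  exfalso. apply Hz, C_eq; simpl; nra.
Qed.

Lemma Cnorm_pos z : z <> C0 -> 0 < Cnorm z.
Proof. intros Hz. apply sqrt_lt_R0, Cnorm2_pos, Hz. Qed.

Lemma Rabs_fst_le_Cnorm z : Rabs (fst z) <= Cnorm z.
Proof.
  rewrite <- sqrt_Rsqr_abs. apply sqrt_le_1_alt. unfold Rsqr. nra.
Qed.

Lemma Rabs_snd_le_Cnorm z : Rabs (snd z) <= Cnorm z.
Proof.
  rewrite <- sqrt_Rsqr_abs. apply sqrt_le_1_alt. unfold Rsqr. nra.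
Qed.

Lemma Cnorm_real z : snd z = 0 -> Cnorm z = Rabs (fst z).
Proof.
  intros Hz. unfold Cnorm. rewrite Hz, Rmult_0_l, Rplus_0_r. apply sqrt_Rsqr_abs.
Qed.

Lemma Cnorm_scale c z : 0 <= c -> Cnorm (Cscale c z) = c * Cnorm z.
Proof.
  intros Hc. unfold Cnorm, Cscale; simpl.
  replace (c * fst z * (c * fst z) + c * snd z * (c * snd z))
    with ((c * c) * (fst z * fst z + snd z * snd z)) by ring.
  rewrite sqrt_mult_alt by nra. rewrite sqrt_square; auto.
Qed.

Lemma Cnorm_Cmul x y : Cnorm (Cmul x y) = Cnorm x * Cnorm y.
Proof. unfold Cnorm, Cmul; simpl. rewrite <- sqrt_mult_alt by nra. f_equal; ring. Qed.

Lemma Cnorm_Copp z : Cnorm (Copp z) = Cnorm z.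
Proof. unfold Cnorm, Copp; simpl. f_equal; ring. Qed.

Lemma Cnorm_C1 : Cnorm Defs.C1 = 1.
Proof. unfold Cnorm; simpl. rewrite Rmult_1_l, Rmult_0_l, Rplus_0_r. apply sqrt_1. Qed.

Lemma Copp_C0 : Copp C0 = C0.
Proof. apply C_eq; simpl; ring. Qed.

Lemma Copp_neq0 z : z <> C0 -> Copp z <> C0.
Proof. intros Hz E. apply Hz. apply C_eq; generalize (f_equal fst E) (f_equal snd E); simpl; lra. Qed.

Lemma Copp_neq z : z <> C0 -> z <> Copp z.
Proof. intros Hz E. apply Hz. apply C_eq; generalize (f_equal fst E) (f_equal snd E); simpl; lra. Qed.

Lemma Cmul_C0_l y : Cmul C0 y = C0.
Proof. apply C_eq; simpl; ring. Qed.

Lemma Cmul_C0_r y : Cmul y C0 = C0.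
Proof. apply C_eq; simpl; ring. Qed.

Lemma C1_neq0 : Defs.C1 <> C0.
Proof. intros E. generalize (f_equal fst E); simpl; lra. Qed.

Lemma Cscale_1 z : Cscale 1 z = z.
Proof. apply C_eq; simpl; ring. Qed.

Lemma Cscale_inj c x y : c <> 0 -> Cscale c x = Cscale c y -> x = y.
Proof.
  intros Hc E. apply C_eq; [generalize (f_equal fst E)|generalize (f_equal snd E)];
    simpl; intros Ec; apply Rmult_eq_reg_l in Ec; auto.
Qed.

Lemma Cscale_C0 c : Cscale c C0 = C0.
Proof. apply C_eq; simpl; ring. Qed.

Lemma Cscale_Copp c z : Cscale c (Copp z) = Copp (Cscale c z).
Proof. apply C_eq; simpl; ring. Qed.

Lemma in_cone_l a b : in_cone a b a.
Proof. exists 1, 0. repeat split; try lra. apply C_eq; simpl; ring. Qed.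

Lemma in_cone_scale c a b z : in_cone a b z -> in_cone (Cscale c a) (Cscale c b) (Cscale c z).
Proof.
  intros [l [m [Hl [Hm ->]]]]. exists l, m. repeat split; auto. apply C_eq; simpl; ring.
Qed.

Lemma in_cone_diag a z : a <> C0 -> Cnorm z = Cnorm a -> in_cone a a z -> z = a.
Proof.
  intros Ha Hz [l [m [Hl [Hm Ez]]]].
  assert (Ez' : z = Cscale (l + m) a) by (rewrite Ez; apply C_eq; simpl; ring).
  rewrite Ez', Cnorm_scale in Hz by lra.
  assert (Hlm : l + m = 1).
  { pose proof (Cnorm_pos a Ha). apply (Rmult_eq_reg_r (Cnorm a)); lra. }
  rewrite Ez', Hlm. apply Cscale_1.
Qed.

(** * The deformation [|z|^(-t) z] and the phase map *)

(* [Rpower 0 y] is [exp (y * ln 0)], a junk value, hence the explicit case at [0]. *)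
Definition deform_norm (t r : R) : R := if Req_EM_T r 0 then 0 else Rpower r (1 - t).

Lemma deform_norm_0 t : deform_norm t 0 = 0.
Proof. unfold deform_norm; destruct (Req_EM_T 0 0); [reflexivity|lra]. Qed.

Lemma deform_norm_nz t r : r <> 0 -> deform_norm t r = Rpower r (1 - t).
Proof. unfold deform_norm; destruct (Req_EM_T r 0); [lra|reflexivity]. Qed.

Lemma Rpower_pos r y : 0 < Rpower r y.
Proof. apply exp_pos. Qed.

Lemma deform_norm_ge0 t r : 0 <= deform_norm t r.
Proof. unfold deform_norm; destruct (Req_EM_T r 0); [lra|left; apply Rpower_pos]. Qed.

Lemma Rpower_1_minus r t : 0 < r -> Rpower r (1 - t) = r * Rpower r (- t).
Proof. intros Hr. unfold Rminus. rewrite Rpower_plus, Rpower_1; auto. Qed.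

Section DeformNorm.
Variable t : R.
Hypothesis t_lt1 : t < 1.

Lemma deform_norm_lt a b : 0 <= a < b -> deform_norm t a < deform_norm t b.
Proof.
  intros [Ha Hab]. rewrite (deform_norm_nz t b) by lra.
  destruct (Req_dec a 0) as [->|Ha0].
  - rewrite deform_norm_0. apply Rpower_pos.
  - rewrite deform_norm_nz by exact Ha0. apply Rlt_Rpower_l; lra.
Qed.

Lemma deform_norm_le a b : 0 <= a <= b -> deform_norm t a <= deform_norm t b.
Proof.
  intros Hab. destruct (Req_dec a b) as [->|Hne]; [lra|].
  left. apply deform_norm_lt. lra.
Qed.

Lemma deform_norm_inj a b : 0 <= a -> 0 <= b -> deform_norm t a = deform_norm t b -> a = b.
Proof.
  intros Ha Hb E. destruct (Rtotal_order a b) as [Hlt|[Heq|Hgt]]; auto.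
  - pose proof (deform_norm_lt a b ltac:(lra)). lra.
  - pose proof (deform_norm_lt b a ltac:(lra)). lra.
Qed.

End DeformNorm.

Lemma deform_norm_subadditive t a b : 0 <= t -> 0 <= a -> 0 <= b ->
  deform_norm t (a + b) <= deform_norm t a + deform_norm t b.
Proof.
  intros Ht Ha Hb.
  destruct (Req_dec a 0) as [->|Ha0]; [rewrite Rplus_0_l, deform_norm_0; lra|].
  destruct (Req_dec b 0) as [->|Hb0]; [rewrite Rplus_0_r, deform_norm_0; lra|].
  rewrite !deform_norm_nz, !Rpower_1_minus by lra.
  (* (a + b)^(1-t) = a (a+b)^(-t) + b (a+b)^(-t), and r^(-t) decreases in r *)
  assert (Hdec : forall r, 0 < r -> r <= a + b -> Rpower (a + b) (- t) <= Rpower r (- t)).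
  { intros r Hr Hrab. rewrite !Rpower_Ropp.
    apply Rinv_le_contravar; [apply Rpower_pos|apply Rle_Rpower_l; lra]. }
  pose proof (Hdec a ltac:(lra) ltac:(lra)). pose proof (Hdec b ltac:(lra) ltac:(lra)).
  nra.
Qed.

Definition deform (z : Defs.C) (t : R) : Defs.C :=
  if Req_EM_T (Cnorm z) 0 then C0 else Cscale (Rpower (Cnorm z) (- t)) z.

Lemma deform_C0 t : deform C0 t = C0.
Proof. unfold deform. rewrite Cnorm_C0. destruct (Req_EM_T 0 0); [reflexivity|lra]. Qed.

Lemma deform_nz z t : z <> C0 -> deform z t = Cscale (Rpower (Cnorm z) (- t)) z.
Proof.
  intros Hz. unfold deform. destruct (Req_EM_T (Cnorm z) 0) as [E|]; [|reflexivity].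
  apply Cnorm_eq0 in E. contradiction.
Qed.

Lemma deform_0 z : deform z 0 = z.
Proof.
  destruct (C_eq_dec z C0) as [->|Hz]; [apply deform_C0|].
  rewrite deform_nz, Ropp_0, Rpower_O by (auto; apply Cnorm_pos, Hz). apply Cscale_1.
Qed.

Lemma deform_1 z : deform z 1 = ph z.
Proof.
  unfold deform, ph. destruct (Req_EM_T (Cnorm z) 0) as [|Hz]; [reflexivity|].
  rewrite Rpower_Ropp, Rpower_1; [reflexivity|]. pose proof (Cnorm_ge0 z). lra.
Qed.

Lemma Cnorm_deform z t : Cnorm (deform z t) = deform_norm t (Cnorm z).
Proof.
  destruct (C_eq_dec z C0) as [->|Hz].
  - rewrite deform_C0, Cnorm_C0, deform_norm_0. reflexivity.
  - pose proof (Cnorm_pos z Hz).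
    rewrite deform_nz, deform_norm_nz, Cnorm_scale, Rpower_1_minus
      by (assumption || lra || apply Rlt_le, Rpower_pos).
    ring.
Qed.

Lemma deform_opp z t : deform (Copp z) t = Copp (deform z t).
Proof.
  destruct (C_eq_dec z C0) as [->|Hz]; [rewrite Copp_C0, deform_C0, Copp_C0; reflexivity|].
  rewrite !deform_nz, Cnorm_Copp by auto using Copp_neq0. apply Cscale_Copp.
Qed.

Lemma deform_mul x y t : deform (Cmul x y) t = Cmul (deform x t) (deform y t).
Proof.
  destruct (C_eq_dec x C0) as [->|Hx]; [rewrite Cmul_C0_l, deform_C0, Cmul_C0_l; reflexivity|].
  destruct (C_eq_dec y C0) as [->|Hy]; [rewrite Cmul_C0_r, deform_C0, Cmul_C0_r; reflexivity|].
  pose proof (Cnorm_pos x Hx). pose proof (Cnorm_pos y Hy).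
  assert (Hxy : Cmul x y <> C0).
  { intros E. pose proof (Cnorm_Cmul x y) as N. rewrite E, Cnorm_C0 in N. nra. }
  rewrite !deform_nz, Cnorm_Cmul, <- Rpower_mult_distr by auto.
  apply C_eq; simpl; ring.
Qed.

Lemma deform_C1 t : deform Defs.C1 t = Defs.C1.
Proof.
  rewrite deform_nz by exact C1_neq0. rewrite Cnorm_C1.
  unfold Rpower. rewrite ln_1, Rmult_0_r, exp_0. apply Cscale_1.
Qed.

Lemma deform_inj t a b : t < 1 -> deform a t = deform b t -> a = b.
Proof.
  intros Ht E.
  assert (N : Cnorm a = Cnorm b).
  { apply (deform_norm_inj t); auto using Cnorm_ge0. rewrite <- !Cnorm_deform, E. reflexivity. }
  destruct (C_eq_dec a C0) as [->|Ha].
  - rewrite Cnorm_C0 in N. symmetry. apply Cnorm_eq0. auto.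
  - assert (Hb : b <> C0) by (intros ->; apply Ha, Cnorm_eq0; rewrite N; apply Cnorm_C0).
    rewrite !deform_nz, N in E by auto.
    apply Cscale_inj in E; [exact E|apply Rgt_not_eq, Rpower_pos].
Qed.

Lemma deform_real z t : is_real z -> is_real (deform z t).
Proof.
  unfold is_real. intros Hz. destruct (C_eq_dec z C0) as [->|Hnz]; [rewrite deform_C0; reflexivity|].
  rewrite deform_nz by exact Hnz. simpl. rewrite Hz. ring.
Qed.

Lemma deform_real_nonneg z t : is_real_nonneg z -> is_real_nonneg (deform z t).
Proof.
  intros [Hz Hpos]. split; [apply deform_real, Hz|].
  destruct (C_eq_dec z C0) as [->|Hnz]; [rewrite deform_C0; simpl; lra|].
  rewrite deform_nz by exact Hnz. simpl. pose proof (Rpower_pos (Cnorm z) (- t)). nra.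
Qed.

Lemma ph_C0 : ph C0 = C0.
Proof. rewrite <- deform_1. apply deform_C0. Qed.

Lemma ph_C1 : ph Defs.C1 = Defs.C1.
Proof. rewrite <- deform_1. apply deform_C1. Qed.

Lemma ph_mul x y : ph (Cmul x y) = Cmul (ph x) (ph y).
Proof. rewrite <- !deform_1. apply deform_mul. Qed.

Lemma ph_Copp z : ph (Copp z) = Copp (ph z).
Proof. rewrite <- !deform_1. apply deform_opp. Qed.

Lemma ph_nz z : z <> C0 -> ph z = Cscale (/ Cnorm z) z.
Proof.
  intros Hz. unfold ph. destruct (Req_EM_T (Cnorm z) 0) as [E|]; [|reflexivity].
  apply Cnorm_eq0 in E. contradiction.
Qed.

Lemma Cnorm_ph z : z <> C0 -> Cnorm (ph z) = 1.
Proof.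
  intros Hz. pose proof (Cnorm_pos z Hz).
  rewrite ph_nz, Cnorm_scale by (auto; left; apply Rinv_0_lt_compat; auto). field. lra.
Qed.

Lemma ph_neq0 z : z <> C0 -> ph z <> C0.
Proof. intros Hz E. pose proof (Cnorm_ph z Hz) as N. rewrite E, Cnorm_C0 in N. lra. Qed.

Lemma ph_real_cases x : is_real x ->
  (x = C0 /\ ph x = C0) \/ (0 < fst x /\ ph x = Defs.C1) \/ (fst x < 0 /\ ph x = Cm1).
Proof.
  intros Hx. destruct (C_eq_dec x C0) as [->|Hnz]; [left; split; [reflexivity|apply ph_C0]|right].
  pose proof (Cnorm_pos x Hnz) as Hpos. rewrite ph_nz by exact Hnz. rewrite Cnorm_real in * by exact Hx.
  unfold is_real in Hx. destruct (Rlt_le_dec (fst x) 0) as [Hneg|Hnn].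
  - right. split; [exact Hneg|]. rewrite Rabs_left by exact Hneg.
    apply C_eq; simpl; [field; lra|rewrite Hx; ring].
  - left. rewrite Rabs_pos_eq in * by exact Hnn. split; [lra|].
    apply C_eq; simpl; [field; lra|rewrite Hx; ring].
Qed.

Definition deform_factor (u v w : R) : R := Rpower (sqrt (u * u + v * v)) (- w).

Lemma deform_coords z t :
  deform z t = Cscale (deform_factor (fst z) (snd z) t) z.
Proof.
  destruct (C_eq_dec z C0) as [->|Hz]; [rewrite deform_C0, Cscale_C0; reflexivity|].
  apply deform_nz, Hz.
Qed.

Lemma continuous3_deform_factor a b c : 0 < a * a + b * b -> continuous3_at deform_factor a b c.
Proof.
  intros Hab. unfold deform_factor, Rpower.
  apply (continuous3_comp exp); [exact (derivable_continuous_pt _ _ (derivable_pt_exp _))|].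
  apply continuous3_mult; [apply continuous3_opp, continuous3_thd|].
  apply (continuous3_comp ln).
  { apply derivable_continuous_pt. exists (/ sqrt (a * a + b * b)).
    apply derivable_pt_lim_ln, sqrt_lt_R0, Hab. }
  apply (continuous3_comp sqrt); [apply sqrt_continuity_pt, Hab|].
  apply continuous3_plus; apply continuous3_mult; auto using continuous3_fst, continuous3_snd.
Qed.

Lemma Cnorm_lt_coords z e : Rabs (fst z) < e / 2 -> Rabs (snd z) < e / 2 -> Cnorm z < e.
Proof.
  intros H1 H2. apply Rabs_def2 in H1. apply Rabs_def2 in H2.
  rewrite <- (sqrt_square e) by lra. apply sqrt_lt_1_alt. split; nra.
Qed.

Lemma deform_continuous_at x t : x <> C0 -> forall e, e > 0 -> exists d, d > 0 /\
  forall y s, Rabs (fst y - fst x) < d -> Rabs (snd y - snd x) < d -> Rabs (s - t) < d ->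
  Cnorm (Csub (deform y s) (deform x t)) < e.
Proof.
  intros Hx e He.
  pose proof (continuous3_deform_factor (fst x) (snd x) t (Cnorm2_pos x Hx)) as Hf.
  destruct (continuous3_mult _ _ _ _ _ Hf (continuous3_fst (fst x) (snd x) t) (e / 2))
    as [d1 [Hd1 H1]]; [lra|].
  destruct (continuous3_mult _ _ _ _ _ Hf (continuous3_snd (fst x) (snd x) t) (e / 2))
    as [d2 [Hd2 H2]]; [lra|].
  exists (Rmin d1 d2). split; [apply Rmin_case; lra|].
  intros y s Hy1 Hy2 Hs. pose proof (Rmin_l d1 d2). pose proof (Rmin_r d1 d2).
  rewrite !deform_coords. apply Cnorm_lt_coords; simpl; [apply H1|apply H2]; lra.
Qed.

Definition zero_coarse_euclid (P : Defs.C -> Prop) (hd : Defs.C -> Defs.C -> Defs.C -> Prop) : HF :=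
  mkHF P hd (zero_coarse P (euclid_open P)).

Lemma euclid_open_box P x d :
  euclid_open P (fun y => P y /\ Rabs (fst y - fst x) < d /\ Rabs (snd y - snd x) < d).
Proof.
  split; [intros z [Pz _]; exact Pz|].
  intros y [Py [Hy1 Hy2]].
  exists (Rmin (d - Rabs (fst y - fst x)) (d - Rabs (snd y - snd x))).
  split; [apply Rmin_case; lra|].
  intros z Pz Hz.
  pose proof (Rmin_l (d - Rabs (fst y - fst x)) (d - Rabs (snd y - snd x))).
  pose proof (Rmin_r (d - Rabs (fst y - fst x)) (d - Rabs (snd y - snd x))).
  pose proof (Rabs_fst_le_Cnorm (Csub z y)) as Hz1. pose proof (Rabs_snd_le_Cnorm (Csub z y)) as Hz2.
  simpl in Hz1, Hz2.
  split; [exact Pz|split].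
  - replace (fst z - fst x) with ((fst z + - fst y) + (fst y - fst x)) by ring.
    eapply Rle_lt_trans; [apply Rabs_triang|lra].
  - replace (snd z - snd x) with ((snd z + - snd y) + (snd y - snd x)) by ring.
    eapply Rle_lt_trans; [apply Rabs_triang|lra].
Qed.

Lemma deform_continuous_homotopy P hd :
  (forall z t, P z -> unit_interval t -> P (deform z t)) ->
  continuous_homotopy (zero_coarse_euclid P hd) (zero_coarse_euclid P hd) deform.
Proof.
  intros HP. split; [exact HP|]. simpl. intros V HV.
  split; [intros x t [Px [It _]]; split; assumption|].
  intros x t [Px [It Vx]].
  destruct HV as [Vall|[[_ Vopen] V0]].
  - exists P, 1. split; [left; tauto|]. split; [exact Px|]. split; [lra|].
    intros y s Py Is _. split; [exact Py|split; [exact Is|apply Vall, HP; auto]].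
  - assert (Hx : x <> C0) by (intros ->; rewrite deform_C0 in Vx; exact (V0 Vx)).
    destruct (Vopen _ Vx) as [eps [Heps Hball]].
    destruct (deform_continuous_at x t Hx eps Heps) as [d [Hd Hclose]].
    assert (Hnear : forall y s, P y -> unit_interval s ->
              Rabs (fst y - fst x) < d -> Rabs (snd y - snd x) < d -> Rabs (s - t) < d ->
              V (deform y s)).
    { intros y s Py Is Hy1 Hy2 Hs. apply Hball; auto. }
    assert (Htd : Rabs (t - t) < d) by (rewrite Rminus_diag, Rabs_R0; exact Hd).
    exists (fun y => P y /\ Rabs (fst y - fst x) < d /\ Rabs (snd y - snd x) < d), d.
    split.
    { right. split; [apply euclid_open_box|].
      (* [deform 0 t = 0] lies outside [V] *)
      intros [P0 [H01 H02]]. apply V0. rewrite <- (deform_C0 t). apply Hnear; auto. }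
    split; [rewrite !Rminus_diag, Rabs_R0; auto|].
    split; [exact Hd|].
    intros y s [Py [Hy1 Hy2]] Is Hs. split; [exact Py|split; [exact Is|auto]].
Qed.

Lemma ph_locally_constant_real x : is_real x -> x <> C0 -> exists eps, eps > 0 /\
  forall y, is_real y -> Cnorm (Csub y x) < eps -> ph y = ph x.
Proof.
  intros Hx Hnz. exists (Cnorm x). split; [apply Cnorm_pos, Hnz|].
  intros y Hy Hyx.
  pose proof (Rabs_fst_le_Cnorm (Csub y x)) as Hfst. simpl in Hfst.
  rewrite (Cnorm_real x) in Hyx by exact Hx.
  assert (Hlt : Rabs (fst y + - fst x) < Rabs (fst x)) by lra.
  clear Hyx Hfst. apply Rabs_def2 in Hlt.
  destruct (ph_real_cases x Hx) as [[E _]|[[Hpos ->]|[Hneg ->]]]; [contradiction| |];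
    [rewrite Rabs_pos_eq in Hlt by lra|rewrite Rabs_left in Hlt by lra];
    (destruct (ph_real_cases y Hy) as [[-> _]|[[? ->]|[? ->]]]; simpl in Hlt; [lra|..]);
    solve [reflexivity|lra].
Qed.

Lemma ph_continuous_real P hd F :
  (forall x, P x -> is_real x) -> (forall x, P x -> car F (ph x)) ->
  (forall V, opens F V -> (forall z, V z <-> car F z) \/ ~ V C0) ->
  continuous_map (zero_coarse_euclid P hd) F ph.
Proof.
  intros Preal Pph Fopens. split; [exact Pph|]. simpl. intros V HV.
  destruct (Fopens V HV) as [Vall|V0].
  - left. intros z. split; [tauto|]. intros Pz. split; [exact Pz|apply Vall, Pph, Pz].
  - right. split; [split; [tauto|]|rewrite ph_C0; tauto].
    intros x [Px Vx].
    assert (Hx : x <> C0) by (intros ->; rewrite ph_C0 in Vx; exact (V0 Vx)).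
    destruct (ph_locally_constant_real x (Preal x Px) Hx) as [eps [Heps Hconst]].
    exists eps. split; [exact Heps|]. intros y Py Hy. rewrite Hconst; auto.
Qed.

Lemma is_hom_id F : is_hom F F (fun x => x).
Proof. repeat split; auto. Qed.

Lemma is_hom_comp F F' F'' f g :
  is_hom F F' f -> is_hom F' F'' g -> is_hom F F'' (fun x => g (f x)).
Proof.
  intros [f_car [f0 [f1 [fmul fadd]]]] [g_car [g0 [g1 [gmul gadd]]]].
  repeat split; auto.
  - rewrite f0; exact g0.
  - rewrite f1; exact g1.
  - intros x y Hx Hy. rewrite fmul by auto. apply gmul; auto.
Qed.

Lemma constant_continuous_homotopy F :
  (forall V, opens F V -> forall z, V z -> car F z) -> continuous_homotopy F F (fun x _ => x).
Proof.
  intros Hsub. split; [auto|]. intros V HV.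
  split; [intros x t [Hx [It _]]; auto|].
  intros x t [_ [_ Vx]]. exists V, 1. split; [exact HV|split; [exact Vx|split; [lra|]]].
  intros y s Vy Is _. split; [eapply Hsub; eauto|split; assumption].
Qed.

Lemma deform_homotopy_equivalence F F' :
  is_hom F F' (fun x => x) -> continuous_map F F' (fun x => x) ->
  is_hom F' F ph -> continuous_map F' F ph ->
  (forall V, opens F V -> forall z, V z -> car F z) ->
  (forall z, car F z -> ph z = z) ->
  continuous_homotopy F' F' deform ->
  (forall t, 0 <= t < 1 -> is_hom F' F' (fun x => deform x t)) ->
  homotopy_equivalence_via F F' (fun x => x) ph.
Proof.
  intros incl_hom incl_cont ph_hom ph_cont opens_car ph_fix deform_cont deform_hom.
  do 4 (split; [assumption|]). split.
  - exists (fun x _ => x). split; [split; [apply constant_continuous_homotopy, opens_car|]|].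
    + intros t _. apply is_hom_id.
    + split; [reflexivity|]. intros x Hx. symmetry. apply ph_fix, Hx.
  - exists deform. split; [split; [exact deform_cont|]|].
    + intros t [Ht0 Ht1]. destruct (Req_dec t 1) as [->|Ht].
      * replace (fun x => deform x 1) with ph
          by (apply functional_extensionality; intros x; symmetry; apply deform_1).
        exact (is_hom_comp _ _ _ _ _ ph_hom incl_hom).
      * apply deform_hom. lra.
    + split; intros; [apply deform_0|apply deform_1].
Qed.

Lemma deform_is_hom F t :
  (forall x, car F x -> car F (deform x t)) ->
  (forall x y z, car F x -> car F y -> hadd F x y z ->
     hadd F (deform x t) (deform y t) (deform z t)) ->
  is_hom F F (fun x => deform x t).
Proof.
  intros Hcar Hadd. split; [exact Hcar|].
  split; [apply deform_C0|]. split; [apply deform_C1|]. split; [intros; apply deform_mul|exact Hadd].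
Qed.

Lemma incl_is_hom F F' :
  (forall x, car F x -> car F' x) ->
  (forall x y z, car F x -> car F y -> hadd F x y z -> hadd F' x y z) ->
  is_hom F F' (fun x => x).
Proof. intros Hcar Hadd. repeat split; auto. Qed.

Lemma ph_is_hom F F' :
  (forall x, car F x -> car F' (ph x)) ->
  (forall x y z, car F x -> car F y -> hadd F x y z -> hadd F' (ph x) (ph y) (ph z)) ->
  is_hom F F' ph.
Proof.
  intros Hcar Hadd. split; [exact Hcar|].
  split; [apply ph_C0|]. split; [apply ph_C1|]. split; [intros; apply ph_mul|exact Hadd].
Qed.

(** * [K] in [△] and in [T△] *)

Lemma real_nonneg_eq x y : is_real_nonneg x -> is_real_nonneg y -> fst x = fst y -> x = y.
Proof. intros [Hx _] [Hy _] E. apply C_eq; [exact E|rewrite Hx, Hy; reflexivity]. Qed.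

Lemma Cnorm_real_nonneg z : is_real_nonneg z -> Cnorm z = fst z.
Proof. intros [Hz Hpos]. rewrite Cnorm_real by exact Hz. apply Rabs_pos_eq, Hpos. Qed.

Lemma fst_deform_real_nonneg z t : is_real_nonneg z -> fst (deform z t) = deform_norm t (fst z).
Proof.
  intros Hz. rewrite <- (Cnorm_real_nonneg (deform z t)) by (apply deform_real_nonneg, Hz).
  rewrite Cnorm_deform, Cnorm_real_nonneg by exact Hz. reflexivity.
Qed.

Lemma ph_real_nonneg_cases x : is_real_nonneg x ->
  (x = C0 /\ ph x = C0) \/ (0 < fst x /\ ph x = Defs.C1).
Proof. intros [Hx Hpos]. destruct (ph_real_cases x Hx) as [|[|[Hneg _]]]; auto. lra. Qed.

Lemma ph_real_nonneg_K x : is_real_nonneg x -> K_car (ph x).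
Proof. intros Hx. destruct (ph_real_nonneg_cases x Hx) as [[_ ->]|[_ ->]]; [left|right]; reflexivity. Qed.

Lemma K_car_real_nonneg z : K_car z -> is_real_nonneg z.
Proof. intros [-> | ->]; split; simpl; lra. Qed.

Lemma K_opens_car V : K_opens V -> forall z, V z -> K_car z.
Proof. intros [V0|[V1|VK]] z Vz; [destruct (V0 z Vz)|right; apply V1|apply VK]; exact Vz. Qed.

Lemma ph_fix_K z : K_car z -> ph z = z.
Proof. intros [-> | ->]; [apply ph_C0|apply ph_C1]. Qed.

Lemma K_opens_cases V : K_opens V -> (forall z, V z <-> K_car z) \/ ~ V C0.
Proof.
  intros [V0|[V1|VK]]; [right; apply V0|right|left; exact VK].
  intros V0. apply V1 in V0. exact (C1_neq0 (eq_sym V0)).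
Qed.

Lemma incl_K_continuous hd : continuous_map Kh (zero_coarse_euclid is_real_nonneg hd) (fun x => x).
Proof.
  split; [exact K_car_real_nonneg|]. simpl. intros V [Vall|[_ V0]].
  - right; right. intros z. split; [tauto|]. intros Kz. split; [exact Kz|apply Vall, K_car_real_nonneg, Kz].
  - destruct (classic (V Defs.C1)) as [V1|V1].
    + right; left. intros z. split; [intros [[-> | ->] Vz]; tauto|intros ->; split; [right|]; auto].
    + left. intros z [[-> | ->] Vz]; auto.
Qed.

Lemma K_hadd_ph x y z : is_real_nonneg x -> is_real_nonneg y -> is_real_nonneg z ->
  (x = C0 -> z = y) -> (y = C0 -> z = x) -> K_hadd (ph x) (ph y) (ph z).
Proof.
  intros Hx Hy Hz Ex Ey.
  destruct (C_eq_dec x C0) as [->|Hx0]; [rewrite (Ex eq_refl), ph_C0; left; auto|].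
  destruct (C_eq_dec y C0) as [->|Hy0]; [rewrite (Ey eq_refl), ph_C0; right; left; auto|].
  destruct (ph_real_nonneg_cases x Hx) as [[? _]|[_ ->]]; [contradiction|].
  destruct (ph_real_nonneg_cases y Hy) as [[? _]|[_ ->]]; [contradiction|].
  right; right. split; [reflexivity|split; [reflexivity|]].
  destruct (ph_real_nonneg_cases z Hz) as [[_ ->]|[_ ->]]; auto.
Qed.

Lemma incl_K_Tri_hom : is_hom Kh Tri0 (fun x => x).
Proof.
  apply incl_is_hom; [exact K_car_real_nonneg|]. simpl.
  intros x y z Hx Hy [[-> ->]|[[-> ->]|[-> [-> [-> | ->]]]]];
    try destruct Hx as [-> | ->]; try destruct Hy as [-> | ->];
    unfold Tri_hadd, is_real_nonneg; simpl;
    rewrite ?Rminus_diag, ?Rminus_0_l, ?Rminus_0_r, ?Rabs_R0, ?Rabs_Ropp, ?Rabs_R1; lra.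
Qed.

Lemma incl_K_TTri_hom : is_hom Kh TTri0 (fun x => x).
Proof.
  apply incl_is_hom; [exact K_car_real_nonneg|]. simpl.
  intros x y z Hx Hy [[-> ->]|[[-> ->]|[-> [-> [-> | ->]]]]];
    try destruct Hx as [-> | ->]; try destruct Hy as [-> | ->];
    unfold TTri_hadd, is_real_nonneg; (split; [simpl; lra|]);
    first [ right; split; [reflexivity|simpl; lra]
          | left; split; [intros E; injection E; lra|simpl; unfold Rmax; destruct Rle_dec; lra] ].
Qed.

Lemma ph_Tri_K_hom : is_hom Tri0 Kh ph.
Proof.
  apply ph_is_hom; [exact ph_real_nonneg_K|]. simpl.
  intros x y z Hx Hy [Hz [Hlow Hup]]. apply K_hadd_ph; auto; intros ->; apply real_nonneg_eq; auto;
    destruct Hx as [_ Ha], Hy as [_ Hb]; unfold C0 in *; simpl in *;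
    [rewrite Rminus_0_l, Rabs_Ropp in Hlow|rewrite Rminus_0_r in Hlow];
    rewrite Rabs_pos_eq in Hlow by assumption; lra.
Qed.

Lemma ph_TTri_K_hom : is_hom TTri0 Kh ph.
Proof.
  apply ph_is_hom; [exact ph_real_nonneg_K|]. simpl.
  intros x y z Hx Hy [Hz Hsum]. apply K_hadd_ph; auto; intros ->; apply real_nonneg_eq; auto;
    destruct Hx as [_ Ha], Hy as [_ Hb];
    destruct Hsum as [[_ ->]|[Exy Hz']]; simpl in *;
    solve [apply Rmax_right; exact Hb|apply Rmax_left; exact Ha|subst; simpl in *; lra].
Qed.

Lemma triangle_monotone_subadditive (N : R -> R) a b c :
  (forall u v, 0 <= u <= v -> N u <= N v) ->
  (forall u v, 0 <= u -> 0 <= v -> N (u + v) <= N u + N v) ->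
  0 <= a -> 0 <= b -> 0 <= c -> Rabs (a - b) <= c <= a + b ->
  Rabs (N a - N b) <= N c <= N a + N b.
Proof.
  intros Nmono Nsub Ha Hb Hc [Hlow Hup].
  pose proof (Rle_abs (a - b)). pose proof (Rle_abs (- (a - b))) as Hneg. rewrite Rabs_Ropp in Hneg.
  pose proof (Nsub b c Hb Hc). pose proof (Nsub a c Ha Hc). pose proof (Nsub a b Ha Hb).
  pose proof (Nmono a (b + c) ltac:(lra)). pose proof (Nmono b (a + c) ltac:(lra)).
  pose proof (Nmono c (a + b) ltac:(lra)).
  split; [apply Rabs_le|]; lra.
Qed.

Lemma Rmax_monotone (N : R -> R) a b :
  (forall u v, 0 <= u <= v -> N u <= N v) -> 0 <= a -> 0 <= b ->
  N (Rmax a b) = Rmax (N a) (N b).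
Proof.
  intros Nmono Ha Hb. destruct (Rle_lt_dec a b) as [Hab|Hba].
  - rewrite !Rmax_right; try apply Nmono; lra.
  - rewrite !Rmax_left; try apply Nmono; lra.
Qed.

Lemma deform_Tri_hom t : 0 <= t < 1 -> is_hom Tri0 Tri0 (fun x => deform x t).
Proof.
  intros Ht. apply deform_is_hom; simpl; [intros; apply deform_real_nonneg; auto|].
  intros x y z Hx Hy [Hz Htri]. split; [apply deform_real_nonneg, Hz|].
  rewrite !fst_deform_real_nonneg by assumption.
  destruct Hx as [_ Ha], Hy as [_ Hb], Hz as [_ Hc].
  apply triangle_monotone_subadditive; auto.
  - intros u v Huv. apply deform_norm_le; lra.
  - intros u v Hu Hv. apply deform_norm_subadditive; lra.
Qed.

Lemma deform_TTri_hom t : 0 <= t < 1 -> is_hom TTri0 TTri0 (fun x => deform x t).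
Proof.
  intros Ht. apply deform_is_hom; simpl; [intros; apply deform_real_nonneg; auto|].
  intros x y z Hx Hy [Hz Hsum]. split; [apply deform_real_nonneg, Hz|].
  rewrite !fst_deform_real_nonneg by assumption.
  destruct Hx as [_ Ha], Hy as [_ Hb].
  destruct Hsum as [[Hxy ->]|[<- [Hz0 Hzx]]].
  - left. split; [intros E; apply Hxy, (deform_inj t); auto; lra|].
    apply Rmax_monotone; auto. intros u v Huv. apply deform_norm_le; lra.
  - right. split; [reflexivity|split; [apply deform_norm_ge0|apply deform_norm_le; lra]].
Qed.

Theorem K_Tri_homotopy_equivalence : homotopy_equivalence_via Kh Tri0 (fun x => x) ph.
Proof.
  apply deform_homotopy_equivalence.
  - exact incl_K_Tri_hom.
  - apply incl_K_continuous.
  - exact ph_Tri_K_hom.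
  - apply ph_continuous_real; [intros x []; assumption|exact ph_real_nonneg_K|exact K_opens_cases].
  - exact K_opens_car.
  - exact ph_fix_K.
  - apply deform_continuous_homotopy. intros z t Hz _. apply deform_real_nonneg, Hz.
  - exact deform_Tri_hom.
Qed.

Theorem K_TTri_homotopy_equivalence : homotopy_equivalence_via Kh TTri0 (fun x => x) ph.
Proof.
  apply deform_homotopy_equivalence.
  - exact incl_K_TTri_hom.
  - apply incl_K_continuous.
  - exact ph_TTri_K_hom.
  - apply ph_continuous_real; [intros x []; assumption|exact ph_real_nonneg_K|exact K_opens_cases].
  - exact K_opens_car.
  - exact ph_fix_K.
  - apply deform_continuous_homotopy. intros z t Hz _. apply deform_real_nonneg, Hz.
  - exact deform_TTri_hom.
Qed.

(** * [S] in [TR] *)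

Lemma real_fst_neq0 x : is_real x -> x <> C0 -> fst x <> 0.
Proof. intros Hx Hnz E. apply Hnz, C_eq; [exact E|exact Hx]. Qed.

Lemma Rabs_fst_C0 : Rabs (fst C0) = 0.
Proof. apply Rabs_R0. Qed.

Lemma S_car_real z : S_car z -> is_real z.
Proof. intros [-> |[-> | ->]]; reflexivity. Qed.

Lemma ph_real_S x : is_real x -> S_car (ph x).
Proof.
  intros Hx. destruct (ph_real_cases x Hx) as [[_ ->]|[[_ ->]|[_ ->]]]; unfold S_car; auto.
Qed.

Lemma Copp_C1 : Copp Defs.C1 = Cm1.
Proof. apply C_eq; simpl; ring. Qed.

Lemma Copp_Cm1 : Copp Cm1 = Defs.C1.
Proof. apply C_eq; simpl; ring. Qed.

Lemma Copp_involutive z : Copp (Copp z) = z.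
Proof. apply C_eq; simpl; ring. Qed.

Lemma ph_fix_S z : S_car z -> ph z = z.
Proof.
  intros [-> |[-> | ->]]; [|apply ph_C0|apply ph_C1].
  rewrite <- Copp_C1, ph_Copp, ph_C1. reflexivity.
Qed.

Lemma S_hadd_comm a b c : S_hadd a b c -> S_hadd b a c.
Proof.
  intros [H|[H|[[Ha [-> ->]]|[Ha [-> Hc]]]]].
  - right; left. exact H.
  - left. exact H.
  - right; right; left. auto.
  - right; right; right. split; [apply Copp_neq0, Ha|split; [symmetry; apply Copp_involutive|exact Hc]].
Qed.

Lemma S_hadd_left a b : S_car a -> S_car b -> a <> C0 -> S_hadd a b a.
Proof.
  intros Ha Hb Hnz.
  destruct (C_eq_dec b C0) as [->|Hb0]; [right; left; auto|].
  destruct (C_eq_dec b a) as [->|Hba]; [right; right; left; auto|].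
  right; right; right. split; [exact Hnz|split; [|exact Ha]].
  destruct Ha as [-> |[-> | ->]]; [|contradiction|];
    destruct Hb as [-> |[-> | ->]]; try contradiction;
    auto using eq_sym, Copp_C1, Copp_Cm1.
Qed.

Lemma S_opens_car V : S_opens V -> forall z, V z -> S_car z.
Proof.
  intros [V0|[V1|[Vm1|[V1m1|VS]]]] z Vz; unfold S_car.
  - destruct (V0 z Vz).
  - apply V1 in Vz. auto.
  - apply Vm1 in Vz. auto.
  - apply V1m1 in Vz. tauto.
  - apply VS, Vz.
Qed.

Lemma S_opens_cases V : S_opens V -> (forall z, V z <-> S_car z) \/ ~ V C0.
Proof.
  assert (C0_C1 : C0 <> Defs.C1) by (intros E; apply C1_neq0; auto).
  assert (C0_Cm1 : C0 <> Cm1) by (intros E; generalize (f_equal fst E); simpl; lra).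
  intros [V0|[V1|[Vm1|[V1m1|VS]]]]; [right; apply V0|right|right|right|left; exact VS];
    intros V0; [apply V1 in V0|apply Vm1 in V0|apply V1m1 in V0]; tauto.
Qed.

Lemma incl_S_TR_hom : is_hom Sh TR0 (fun x => x).
Proof.
  apply incl_is_hom; [exact S_car_real|]. simpl.
  intros x y z Hx Hy Hxyz. split.
  { destruct Hxyz as [[_ ->]|[[_ ->]|[[_ [_ ->]]|[_ [_ Hz]]]]]; auto using S_car_real. }
  destruct Hxyz as [[-> ->]|[[-> ->]|[[Hx0 [-> ->]]|[Hx0 [-> Hz]]]]].
  - destruct (C_eq_dec y C0) as [->|Hy0]; [right; right; left; auto|right; left; split; [|reflexivity]].
    rewrite Rabs_fst_C0. apply Rabs_pos_lt, real_fst_neq0; auto using S_car_real.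
  - destruct (C_eq_dec x C0) as [->|Hx0]; [right; right; left; auto|left; split; [|reflexivity]].
    rewrite Rabs_fst_C0. apply Rabs_pos_lt, real_fst_neq0; auto using S_car_real.
  - right; right; left. auto.
  - right; right; right. split; [reflexivity|].
    destruct Hx as [-> |[-> | ->]]; [|contradiction|];
      destruct Hz as [-> |[-> | ->]]; simpl; unfold Rabs; destruct Rcase_abs; lra.
Qed.

Lemma ph_TR_S_hom : is_hom TR0 Sh ph.
Proof.
  apply ph_is_hom; [exact ph_real_S|]. simpl.
  intros x y z Hx Hy [Hz Hxyz].
  assert (Hsx : S_car (ph x)) by (apply ph_real_S, Hx).
  assert (Hsy : S_car (ph y)) by (apply ph_real_S, Hy).
  assert (Hbig : forall w w' : Defs.C, Rabs (fst w) > Rabs (fst w') -> w <> C0).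
  { intros w w' Hw ->. rewrite Rabs_fst_C0 in Hw. pose proof (Rabs_pos (fst w')). lra. }
  destruct Hxyz as [[Hxy Ez]|[[Hyx Ez]|[[Exy Ez]|[Ey Hzx]]]]; [subst z|subst z|subst y z|subst y].
  - apply S_hadd_left, ph_neq0, (Hbig x y); auto.
  - apply S_hadd_comm, S_hadd_left, ph_neq0, (Hbig y x); auto.
  - destruct (C_eq_dec x C0) as [->|Hx0]; [rewrite ph_C0; left; auto|].
    apply S_hadd_left, ph_neq0; auto.
  - destruct (C_eq_dec x C0) as [->|Hx0].
    + rewrite Rabs_fst_C0 in Hzx. replace z with C0 by (apply C_eq; [simpl; lra|symmetry; exact Hz]).
      rewrite Copp_C0, ph_C0. left; auto.
    + right; right; right. split; [apply ph_neq0, Hx0|split; [apply ph_Copp|apply ph_real_S, Hz]].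
Qed.

Lemma Rabs_fst_deform z t : is_real z -> Rabs (fst (deform z t)) = deform_norm t (Rabs (fst z)).
Proof.
  intros Hz. rewrite <- (Cnorm_real z) by exact Hz.
  rewrite <- Cnorm_real by (apply deform_real, Hz). apply Cnorm_deform.
Qed.

Lemma deform_TR_hom t : 0 <= t < 1 -> is_hom TR0 TR0 (fun x => deform x t).
Proof.
  intros Ht. apply deform_is_hom; simpl; [intros; apply deform_real; auto|].
  intros x y z Hx Hy [Hz Hxyz]. split; [apply deform_real, Hz|].
  destruct Hxyz as [[Hxy Ez]|[[Hyx Ez]|[[Exy Ez]|[Ey Hzx]]]]; [subst z|subst z|subst y z|subst y].
  - left. split; [|reflexivity]. rewrite !Rabs_fst_deform by assumption.
    apply deform_norm_lt; [lra|]. split; [apply Rabs_pos|lra].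
  - right; left. split; [|reflexivity]. rewrite !Rabs_fst_deform by assumption.
    apply deform_norm_lt; [lra|]. split; [apply Rabs_pos|lra].
  - right; right; left. auto.
  - right; right; right. split; [apply deform_opp|].
    assert (Habs : Rabs (fst (deform z t)) <= Rabs (fst (deform x t))).
    { rewrite !Rabs_fst_deform by assumption. apply deform_norm_le; [lra|].
      split; [apply Rabs_pos|apply Rabs_le; exact Hzx]. }
    pose proof (Rle_abs (fst (deform z t))). pose proof (Rle_abs (- fst (deform z t))) as Hneg.
    rewrite Rabs_Ropp in Hneg. lra.
Qed.

Lemma incl_S_continuous : continuous_map Sh TR0 (fun x => x).
Proof.
  split; [exact S_car_real|]. simpl. intros V [Vall|[_ V0]].
  - right; right; right; right. intros z. split; [tauto|].
    intros Sz. split; [exact Sz|apply Vall, S_car_real, Sz].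
  - destruct (classic (V Defs.C1)) as [V1|V1]; destruct (classic (V Cm1)) as [Vm1|Vm1].
    + right; right; right; left. intros z. split.
      * intros [[-> |[-> | ->]] Vz]; tauto.
      * intros [-> | ->]; split; unfold S_car; auto.
    + right; left. intros z. split.
      * intros [[-> |[-> | ->]] Vz]; tauto.
      * intros ->. split; unfold S_car; auto.
    + right; right; left. intros z. split.
      * intros [[-> |[-> | ->]] Vz]; tauto.
      * intros ->. split; unfold S_car; auto.
    + left. intros z [[-> |[-> | ->]] Vz]; tauto.
Qed.

Theorem S_TR_homotopy_equivalence : homotopy_equivalence_via Sh TR0 (fun x => x) ph.
Proof.
  apply deform_homotopy_equivalence.
  - exact incl_S_TR_hom.
  - exact incl_S_continuous.
  - exact ph_TR_S_hom.
  - apply ph_continuous_real; [auto|exact ph_real_S|exact S_opens_cases].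
  - exact S_opens_car.
  - exact ph_fix_S.
  - apply deform_continuous_homotopy. intros z t Hz _. apply deform_real, Hz.
  - exact deform_TR_hom.
Qed.

(** * [Φ] in [TC] *)

Lemma Phi_unit z : Phi_car z -> z <> C0 -> unit_circle z.
Proof. intros [Hz|Hz] Hnz; [exact Hz|contradiction]. Qed.

Lemma Phi_Cnorm_le1 z : Phi_car z -> Cnorm z <= 1.
Proof. intros [Hz| ->]; [unfold unit_circle in Hz; lra|rewrite Cnorm_C0; lra]. Qed.

Lemma unit_circle_neq0 z : unit_circle z -> z <> C0.
Proof. unfold unit_circle. intros Hz ->. rewrite Cnorm_C0 in Hz. lra. Qed.

Lemma ph_Phi z : Phi_car (ph z).
Proof.
  destruct (C_eq_dec z C0) as [->|Hz]; [right; apply ph_C0|left; apply Cnorm_ph, Hz].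
Qed.

Lemma ph_fix_Phi z : Phi_car z -> ph z = z.
Proof.
  intros [Hz| ->]; [|apply ph_C0].
  rewrite ph_nz by (apply unit_circle_neq0, Hz). unfold unit_circle in Hz.
  rewrite Hz, Rinv_1. apply Cscale_1.
Qed.

Lemma Phi_opens_car V : Phi_opens V -> forall z, V z -> Phi_car z.
Proof. intros [VPhi|[Vsub _]] z Vz; [apply VPhi, Vz|left; apply Vsub, Vz]. Qed.

Lemma in_cone_comm a b z : in_cone a b z -> in_cone b a z.
Proof.
  intros [l [m [Hl [Hm ->]]]]. exists m, l. repeat split; auto. apply C_eq; simpl; ring.
Qed.

Lemma Phi_hadd_comm a b c : Phi_hadd a b c -> Phi_hadd b a c.
Proof.
  intros [H|[H|[[Ha [-> ->]]|[[Ha [-> Hc]]|[Ha [Hb [Hba [Hbo [Hc Hcone]]]]]]]]].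
  - right; left. exact H.
  - left. exact H.
  - right; right; left. auto.
  - right; right; right; left.
    split; [apply Copp_neq0, Ha|split; [symmetry; apply Copp_involutive|exact Hc]].
  - right; right; right; right. repeat split; auto using in_cone_comm.
    intros E. apply Hbo. rewrite E, Copp_involutive. reflexivity.
Qed.

Lemma Phi_hadd_left a b : Phi_car a -> Phi_car b -> a <> C0 -> Phi_hadd a b a.
Proof.
  intros Ha Hb Hnz.
  destruct (C_eq_dec b C0) as [->|Hb0]; [right; left; auto|].
  destruct (C_eq_dec b a) as [->|Hba]; [right; right; left; auto|].
  destruct (C_eq_dec b (Copp a)) as [->|Hbo]; [right; right; right; left; auto|].
  right; right; right; right. repeat split; auto using Phi_unit, in_cone_l.
Qed.

Lemma incl_Phi_TC_hom : is_hom Phih TC0 (fun x => x).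
Proof.
  apply incl_is_hom; [intros; exact I|]. simpl.
  intros x y z Hx Hy [[-> ->]|[[-> ->]|[[Hx0 [-> ->]]|[[Hx0 [-> Hz]]|[Hx0 [Hy0 [Hyx [Hyo [Hz Hcone]]]]]]]]].
  - destruct (C_eq_dec y C0) as [->|Hy0].
    + right; right; left. rewrite Copp_C0. split; [reflexivity|lra].
    + right; left. rewrite Cnorm_C0. split; [apply Cnorm_pos, Hy0|reflexivity].
  - destruct (C_eq_dec x C0) as [->|Hx0].
    + right; right; left. rewrite Copp_C0. split; [reflexivity|lra].
    + left. rewrite Cnorm_C0. split; [apply Cnorm_pos, Hx0|reflexivity].
  - right; right; right. repeat split; auto using Copp_neq, in_cone_l.
  - right; right; left. split; [reflexivity|].
    rewrite (Phi_unit x Hx Hx0). apply Phi_Cnorm_le1, Hz.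
  - right; right; right. unfold unit_circle in *.
    rewrite (Phi_unit x Hx Hx0), (Phi_unit y Hy Hy0). auto.
Qed.

Lemma Cnorm_eq_neq0 x w : Cnorm w = Cnorm x -> x <> C0 -> w <> C0.
Proof. intros Hw Hx ->. rewrite Cnorm_C0 in Hw. apply Hx, Cnorm_eq0. auto. Qed.

Lemma deform_in_cone x y z t :
  Cnorm y = Cnorm x -> Cnorm z = Cnorm x -> x <> C0 -> in_cone x y z ->
  in_cone (deform x t) (deform y t) (deform z t).
Proof.
  intros Hy Hz Hx Hcone.
  rewrite !deform_nz, Hy, Hz by eauto using Cnorm_eq_neq0. apply in_cone_scale, Hcone.
Qed.

Lemma deform_inj_opp t x y : t < 1 -> deform y t = Copp (deform x t) -> y = Copp x.
Proof. intros Ht E. apply (deform_inj t); [exact Ht|]. rewrite deform_opp. exact E. Qed.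

Lemma ph_inj_on_circles x y : Cnorm y = Cnorm x -> ph y = ph x -> y = x.
Proof.
  intros Hn E. destruct (C_eq_dec x C0) as [->|Hx].
  - rewrite Cnorm_C0 in Hn. apply Cnorm_eq0, Hn.
  - assert (Hy : y <> C0) by (intros ->; rewrite Cnorm_C0 in Hn; apply Hx, Cnorm_eq0; auto).
    rewrite !ph_nz, Hn in E by auto.
    apply Cscale_inj in E; [exact E|]. apply Rinv_neq_0_compat. pose proof (Cnorm_pos x Hx). lra.
Qed.

Lemma ph_TC_Phi_hom : is_hom TC0 Phih ph.
Proof.
  apply ph_is_hom; [intros; apply ph_Phi|]. simpl.
  intros x y z _ _ Hxyz.
  assert (Hbig : forall w w' : Defs.C, Cnorm w > Cnorm w' -> w <> C0).
  { intros w w' Hw ->. rewrite Cnorm_C0 in Hw. pose proof (Cnorm_ge0 w'). lra. }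
  destruct Hxyz as [[Hxy Ez]|[[Hyx Ez]|[[Ey Hzx]|[Hxy [Hyo [Hzx Hcone]]]]]];
    [subst z|subst z|subst y|].
  - apply Phi_hadd_left, ph_neq0, (Hbig x y); auto using ph_Phi.
  - apply Phi_hadd_comm, Phi_hadd_left, ph_neq0, (Hbig y x); auto using ph_Phi.
  - destruct (C_eq_dec x C0) as [->|Hx0].
    + rewrite Cnorm_C0 in Hzx. replace z with C0 by (apply eq_sym, Cnorm_eq0, Rle_antisym; auto using Cnorm_ge0).
      rewrite Copp_C0, ph_C0. left; auto.
    + right; right; right; left. split; [apply ph_neq0, Hx0|split; [apply ph_Copp|apply ph_Phi]].
  - assert (Hx0 : x <> C0).
    { intros ->. apply Hyo. rewrite Copp_C0. apply Cnorm_eq0. rewrite <- Hxy. apply Cnorm_C0. }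
    destruct (C_eq_dec y x) as [->|Hyx].
    + rewrite (in_cone_diag x z Hx0 Hzx Hcone). apply Phi_hadd_left; auto using ph_Phi, ph_neq0.
    + assert (Hy0 : y <> C0) by (apply (Cnorm_eq_neq0 x); auto).
      assert (Hz0 : z <> C0) by (apply (Cnorm_eq_neq0 x); auto).
      right; right; right; right.
      split; [apply ph_neq0, Hx0|]. split; [apply ph_neq0, Hy0|].
      split; [intros E; apply Hyx, ph_inj_on_circles; auto|].
      split; [intros E; apply Hyo, ph_inj_on_circles; [rewrite Cnorm_Copp; auto|rewrite ph_Copp; exact E]|].
      split; [apply Cnorm_ph, Hz0|].
      rewrite <- !deform_1. apply deform_in_cone; auto.
Qed.

Lemma Cnorm_eq_neq_opp x y : Cnorm x = Cnorm y -> y <> Copp x -> x <> C0.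
Proof.
  intros Hxy Hyo ->. apply Hyo. rewrite Copp_C0. apply Cnorm_eq0. rewrite <- Hxy. apply Cnorm_C0.
Qed.

Lemma deform_TC_hom t : 0 <= t < 1 -> is_hom TC0 TC0 (fun x => deform x t).
Proof.
  intros Ht. apply deform_is_hom; [intros; exact I|]. simpl.
  intros x y z _ _ Hxyz.
  destruct Hxyz as [[Hxy Ez]|[[Hyx Ez]|[[Ey Hzx]|[Hxy [Hyo [Hzx Hcone]]]]]];
    [subst z|subst z|subst y|].
  - left. split; [|reflexivity]. rewrite !Cnorm_deform.
    apply deform_norm_lt; [lra|]. split; [apply Cnorm_ge0|lra].
  - right; left. split; [|reflexivity]. rewrite !Cnorm_deform.
    apply deform_norm_lt; [lra|]. split; [apply Cnorm_ge0|lra].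
  - right; right; left. split; [apply deform_opp|]. rewrite !Cnorm_deform.
    apply deform_norm_le; [lra|]. split; [apply Cnorm_ge0|exact Hzx].
  - right; right; right. rewrite !Cnorm_deform, <- Hxy, Hzx.
    split; [reflexivity|]. split; [intros E; apply Hyo, (deform_inj_opp t); [lra|exact E]|].
    split; [reflexivity|]. apply deform_in_cone; auto. exact (Cnorm_eq_neq_opp x y Hxy Hyo).
Qed.

Lemma incl_Phi_continuous : continuous_map Phih TC0 (fun x => x).
Proof.
  split; [intros; exact I|]. simpl. intros V [Vall|[[_ Vopen] V0]].
  - left. intros z. split; [tauto|]. intros Hz. split; [exact Hz|apply Vall; exact I].
  - right. split.
    + intros z [Hz Vz]. apply Phi_unit; [exact Hz|]. intros ->. exact (V0 Vz).
    + intros x [_ Vx]. destruct (Vopen x Vx) as [eps [Heps Hball]].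
      exists eps. split; [exact Heps|]. intros y Hy Hyx. split; [left; exact Hy|].
      apply Hball; [exact I|exact Hyx].
Qed.

Lemma ph_TC_Phi_continuous : continuous_map TC0 Phih ph.
Proof.
  split; [intros; apply ph_Phi|]. simpl. intros V [Vall|[Vsub Vopen]].
  - left. intros z. split; [tauto|]. intros _. split; [exact I|apply Vall, ph_Phi].
  - assert (V0 : ~ V C0) by (intros V0; exact (unit_circle_neq0 C0 (Vsub C0 V0) eq_refl)).
    right. split; [split; [intros; exact I|]|rewrite ph_C0; tauto].
    intros x [_ Vx].
    assert (Hx : x <> C0) by (intros ->; rewrite ph_C0 in Vx; exact (V0 Vx)).
    destruct (Vopen _ Vx) as [eps [Heps Hball]].
    destruct (deform_continuous_at x 1 Hx eps Heps) as [d [Hd Hclose]].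
    exists (Rmin d (Cnorm x)). split; [apply Rmin_case; [exact Hd|apply Cnorm_pos, Hx]|].
    intros y _ Hyx. split; [exact I|].
    pose proof (Rmin_l d (Cnorm x)). pose proof (Rmin_r d (Cnorm x)).
    assert (Hy : y <> C0).
    { intros ->. replace (Csub C0 x) with (Copp x) in Hyx by (apply C_eq; simpl; ring).
      rewrite Cnorm_Copp in Hyx. lra. }
    pose proof (Rabs_fst_le_Cnorm (Csub y x)) as Hfst. pose proof (Rabs_snd_le_Cnorm (Csub y x)) as Hsnd.
    simpl in Hfst, Hsnd.
    apply Hball; [apply Cnorm_ph, Hy|].
    rewrite <- !deform_1. unfold Rminus in Hclose.
    apply Hclose; [lra|lra|rewrite Rplus_opp_r, Rabs_R0; exact Hd].
Qed.

Theorem Phi_TC_homotopy_equivalence : homotopy_equivalence_via Phih TC0 (fun x => x) ph.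
Proof.
  apply deform_homotopy_equivalence.
  - exact incl_Phi_TC_hom.
  - exact incl_Phi_continuous.
  - exact ph_TC_Phi_hom.
  - exact ph_TC_Phi_continuous.
  - exact Phi_opens_car.
  - exact ph_fix_Phi.
  - apply deform_continuous_homotopy. intros; exact I.
  - exact deform_TC_hom.
Qed.

Theorem corollary2p2 :
  homotopy_equivalence_via Kh Tri0 (fun x => x) ph /\
  homotopy_equivalence_via Sh TR0 (fun x => x) ph /\
  homotopy_equivalence_via Phih TC0 (fun x => x) ph /\
  homotopy_equivalence_via Kh TTri0 (fun x => x) ph.
Proof.
  split; [exact K_Tri_homotopy_equivalence|].
  split; [exact S_TR_homotopy_equivalence|].
  split; [exact Phi_TC_homotopy_equivalence|exact K_TTri_homotopy_equivalence].
Qed.
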